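(* Let $n\ge1$ be an integer and let $k\in\mathbb{R}\setminus C_n$. Then there is a unique pair $(a,b)\in\mathbb{R}^2$ with $(a,b)\neq(0,0)$ satisfying both $S^{(a,b)}_{k,n+1}+S^{(a,b)}_{k,n}=bk+2b+a$ and $4a^3+27b^2=0$; namely $a=-\frac{27(P_n(k)-1)^2}{4(Q_n(k)-k-2)^2}$, $b=\frac{27(P_n(k)-1)^3}{4(Q_n(k)-k-2)^3}$.
   Context: For real $k,a,b$, the generalized $k$-FL sequence is $S^{(a,b)}_{k,0}=2b$, $S^{(a,b)}_{k,1}=bk+a$, $S^{(a,b)}_{k,m}=kS^{(a,b)}_{k,m-1}+S^{(a,b)}_{k,m-2}$ ($m\ge2$). Define $f_m,g_m\in\mathbb{Z}[T]$ by $f_0=0,f_1=1,g_0=2,g_1=T$, $f_m=Tf_{m-1}+f_{m-2}$, $g_m=Tg_{m-1}+g_{m-2}$, and set $P_n=f_{n+1}+f_n$, $Q_n=g_{n+1}+g_n$, so that $S^{(a,b)}_{k,n+1}+S^{(a,b)}_{k,n}=P_n(k)a+Q_n(k)b$. Let $C_n=\{k\in\mathbb{R}: P_n(k)-1=0 \text{ or } Q_n(k)-k-2=0\}$. *)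

From mathcomp Require Import all_boot all_order all_algebra.
Set Implicit Arguments. Unset Strict Implicit. Unset Printing Implicit Defensive.
Import Order.TTheory GRing.Theory Num.Theory.
Local Open Scope ring_scope.

Fixpoint S_FL (R : pzRingType) (k a b : R) (m : nat) : R :=
  match m with
  | 0%N => 2 * b
  | 1%N => b * k + a
  | (S ((S m'') as m')) => k * S_FL k a b m' + S_FL k a b m''
  end.

Fixpoint fpoly (m : nat) : {poly int} :=
  match m with
  | 0%N => 0
  | 1%N => 1
  | (S ((S m'') as m')) => 'X * fpoly m' + fpoly m''
  end.

Fixpoint gpoly (m : nat) : {poly int} :=
  match m with
  | 0%N => 2%:P
  | 1%N => 'X
  | (S ((S m'') as m')) => 'X * gpoly m' + gpoly m''
  end.

Definition Ppoly (n : nat) : {poly int} := fpoly n.+1 + fpoly n.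
Definition Qpoly (n : nat) : {poly int} := gpoly n.+1 + gpoly n.

Definition evalZ (R : realFieldType) (p : {poly int}) (k : R) : R :=
  (map_poly intr p).[k].

Definition Cn (R : realFieldType) (n : nat) : pred R :=
  fun k => (evalZ (Ppoly n) k - 1 == 0) || (evalZ (Qpoly n) k - k - 2 == 0).

(* The sum S_{k,n+1} + S_{k,n} is linear in (a, b), so the first condition says that (a, b) lies
   on the line (P_n(k) - 1) a + (Q_n(k) - k - 2) b = 0 through the origin.  The curve
   4a^3 + 27b^2 = 0 is the cusp t |-> (-3t^2, 2t^3), singular only at the origin; the line meets
   it there doubly and at exactly one other point, t = 3(P_n(k) - 1) / (2(Q_n(k) - k - 2)). *)
From mathcomp Require Import all_boot all_order all_algebra.
From mathcomp Require Import ring.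
Set Implicit Arguments.
Unset Strict Implicit.
Unset Printing Implicit Defensive.
Import Order.TTheory GRing.Theory Num.Theory.
Local Open Scope ring_scope.

Lemma evalZ_mulX_add (R : realFieldType) (p q : {poly int}) (k : R) :
  evalZ ('X * p + q) k = k * evalZ p k + evalZ q k.
Proof. by rewrite /evalZ rmorphD rmorphM /= map_polyX hornerD hornerM hornerX mulrC. Qed.

Lemma S_FL_fpoly_gpoly (R : realFieldType) (k a b : R) (m : nat) :
  S_FL k a b m = evalZ (fpoly m) k * a + evalZ (gpoly m) k * b.
Proof.
suff : S_FL k a b m = evalZ (fpoly m) k * a + evalZ (gpoly m) k * b /\
       S_FL k a b m.+1 = evalZ (fpoly m.+1) k * a + evalZ (gpoly m.+1) k * b by case.
elim: m => [|m [IHm IHm1]].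
  rewrite /evalZ /= !rmorph0 !rmorph1 map_polyC map_polyX /= !hornerC hornerX.
  by split; ring.
split=> //.
change (S_FL k a b m.+2) with (k * S_FL k a b m.+1 + S_FL k a b m).
change (fpoly m.+2) with ('X * fpoly m.+1 + fpoly m).
change (gpoly m.+2) with ('X * gpoly m.+1 + gpoly m).
by rewrite !evalZ_mulX_add IHm IHm1; ring.
Qed.

Lemma S_FL_Ppoly_Qpoly (R : realFieldType) (k a b : R) (n : nat) :
  S_FL k a b n.+1 + S_FL k a b n = evalZ (Ppoly n) k * a + evalZ (Qpoly n) k * b.
Proof.
rewrite !S_FL_fpoly_gpoly /Ppoly /Qpoly /evalZ !rmorphD !hornerD /=.
by ring.
Qed.

Section CuspLine.

Variables (F : numFieldType) (p q : F).
Hypotheses (p_neq0 : p != 0) (q_neq0 : q != 0).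

Definition cusp_line_point : F * F :=
  (- (27 * p ^+ 2) / (4 * q ^+ 2), 27 * p ^+ 3 / (4 * q ^+ 3)).

Let four_neq0 : (4 : F) != 0. Proof. by rewrite pnatr_eq0. Qed.
Let twentyseven_neq0 : (27 : F) != 0. Proof. by rewrite pnatr_eq0. Qed.

Lemma cusp_line_pointP (a b : F) :
  [/\ (a, b) <> (0, 0), p * a + q * b = 0 & 4 * a ^+ 3 + 27 * b ^+ 2 = 0] <->
  (a, b) = cusp_line_point.
Proof.
split.
  case=> ab_neq0 on_line on_cusp.
  have a_eq : a = - (q * b) / p.
    apply/(mulIf p_neq0); rewrite mulrVK ?unitfE //.
    by apply/eqP; rewrite -addr_eq0 (mulrC a) on_line.
  have b_neq0 : b != 0.
    by apply/eqP=> b0; apply: ab_neq0; rewrite a_eq b0 mulr0 oppr0 mul0r.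
  have cubic : b ^+ 2 * (27 * p ^+ 3 - 4 * q ^+ 3 * b) = 0.
    by rewrite -[RHS](mulr0 (p ^+ 3)) -on_cusp a_eq; field.
  have b_eq : b = 27 * p ^+ 3 / (4 * q ^+ 3).
    move/eqP: cubic; rewrite mulf_eq0 expf_eq0 (negPf b_neq0) /= subr_eq0 => /eqP ->.
    by rewrite mulrC mulKf // mulf_neq0 // expf_neq0.
  by rewrite /cusp_line_point a_eq b_eq; congr pair; field; rewrite q_neq0 p_neq0.
case=> -> ->; split.
- case=> _ /eqP; apply/negP.
  by rewrite mulf_neq0 ?invr_neq0 ?mulf_neq0 ?expf_neq0.
- by field.
- by field.
Qed.

End CuspLine.

Theorem lemma3p7 (R : realFieldType) (n : nat) (k : R) :
  (1 <= n)%N -> k \notin Cn (R:=R) n ->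
  let cond (ab : R * R) :=
    ab <> (0, 0) /\
    S_FL k ab.1 ab.2 n.+1 + S_FL k ab.1 ab.2 n = ab.2 * k + 2 * ab.2 + ab.1 /\
    4 * ab.1 ^+ 3 + 27 * ab.2 ^+ 2 = 0 in
  (exists! ab : R * R, cond ab) /\
  cond (- (27 * (evalZ (Ppoly n) k - 1) ^+ 2) / (4 * (evalZ (Qpoly n) k - k - 2) ^+ 2),
        (27 * (evalZ (Ppoly n) k - 1) ^+ 3) / (4 * (evalZ (Qpoly n) k - k - 2) ^+ 3)).
Proof.
move=> _ /norP[p_neq0 q_neq0] cond.
set P := evalZ (Ppoly n) k in p_neq0 q_neq0 cond *.
set Q := evalZ (Qpoly n) k in p_neq0 q_neq0 cond *.
have condP ab : cond ab <-> ab = cusp_line_point (P - 1) (Q - k - 2).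
  case: ab => a b; rewrite -cusp_line_pointP // /cond /= S_FL_Ppoly_Qpoly.
  have lineE : (P - 1) * a + (Q - k - 2) * b = P * a + Q * b - (b * k + 2 * b + a) by ring.
  rewrite lineE; split=> [[nz [e c]]|[nz e c]]; split=> //.
  - by rewrite e subrr.
  - by split=> //; exact: subr0_eq.
split; last exact/condP.
exists (cusp_line_point (P - 1) (Q - k - 2)).
by split=> [|ab /condP]; [exact/condP|].
Qed.
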